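(* Let $(B,\lfloor\cdot,\cdot\rfloor)$ be an SSD space with quadratic form $q$ and let $A\subset B$ be $q$-positive. Then: (1) $A\subset \mathcal{P}_q(\Phi_A^{@})\subset G_{\Phi_A}\subset A^{\pi}\cap \operatorname{conv}^w A$; (2) if $A$ is convex and $w(B,B)$-closed, then $A=G_{\Phi_A}$; (3) if $A$ is maximally $q$-positive, then $A=G_{\Phi_A}$.
   Context: An SSD space is a pair $(B,\lfloor\cdot,\cdot\rfloor)$ with $B$ a nonzero real vector space and $\lfloor\cdot,\cdot\rfloor$ a symmetric bilinear form; $q(b)=\frac12\lfloor b,b\rfloor$. $w(B,B)$ is the (possibly non-Hausdorff) weak topology on $B$, the coarsest topology making all maps $b\mapsto\lfloor b,c\rfloor$ ($c\in B$) continuous; $\operatorname{conv}^w A$ denotes the $w(B,B)$-closure of the convex hull of $A$. A nonempty $A\subset B$ is $q$-positive if $q(b-c)\ge0$ for all $b,c\in A$; maximally $q$-positive if $q$-positive and not properly contained in another $q$-positive set. $A^{\pi}:=\{b\in B: q(b-a)\ge0\ \forall a\in A\}$. $\Phi_A(x)=\sup_{a\in A}\{\lfloor x,a\rfloor-q(a)\}$. For proper convex $f:B\to\mathbb{R}\cup\{+\infty\}$, $f^{@}(b)=\sup_{c\in B}\{\lfloor c,b\rfloor-f(c)\}$, $\mathcal{P}_q(f)=\{b\in B: f(b)=q(b)\}$, and $G_f=\{b\in B: f(b)+f^{@}(b)=\lfloor b,b\rfloor\}$. *)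

From HB Require Import structures.
From mathcomp Require Import all_boot all_order all_algebra.
From mathcomp Require Import boolp classical_sets reals constructive_ereal ereal.
Set Implicit Arguments. Unset Strict Implicit. Unset Printing Implicit Defensive.
Import Order.TTheory GRing.Theory Num.Theory.
Local Open Scope classical_set_scope.
Local Open Scope ring_scope.

Section SSD.
Variables (R : realType) (B : lmodType R) (bf : B -> B -> R).

(* (B, bf) is an SSD space: B nonzero, bf symmetric bilinear
   (linearity in the second argument follows from symmetry). *)
Definition SSD_space : Prop :=
  (exists b : B, b != 0) /\
  (forall x y, bf x y = bf y x) /\
  (forall (a : R) x y z, bf (a *: x + y) z = a * bf x z + bf y z).

Definition q (b : B) : R := bf b b / 2.

Definition q_positive (A : set B) : Prop :=
  A !=set0 /\ forall b c, A b -> A c -> 0 <= q (b - c).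

Definition max_q_positive (A : set B) : Prop :=
  q_positive A /\ forall A', q_positive A' -> A `<=` A' -> A' = A.

Definition pi_set (A : set B) : set B :=
  [set b | forall a, A a -> 0 <= q (b - a)].

Definition Phi (A : set B) (x : B) : \bar R :=
  ereal_sup [set ((bf x a - q a)%:E) | a in A].

Definition conj_at (f : B -> \bar R) (b : B) : \bar R :=
  ereal_sup [set ((bf c b)%:E - f c)%E | c in [set: B]].

Definition Pq (f : B -> \bar R) : set B := [set b | f b = (q b)%:E].

Definition Gset (f : B -> \bar R) : set B :=
  [set b | (f b + conj_at f b)%E = (bf b b)%:E].

Definition conv_hull (A : set B) : set B :=
  [set x | exists (n : nat) (l : 'I_n -> R) (a : 'I_n -> B),
     (forall i, 0 <= l i) /\ \sum_(i < n) l i = 1 /\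
     (forall i, A (a i)) /\ x = \sum_(i < n) l i *: a i].

(* closure in w(B,B): the initial topology of the maps y |-> bf y c;
   basic neighbourhoods of x are finite intersections
   { y | |bf y c_i - bf x c_i| < e }. *)
Definition w_closure (S : set B) : set B :=
  [set x | forall (cs : seq B) (e : R), 0 < e ->
     exists s, S s /\ all (fun c => `|bf s c - bf x c| < e) cs].

Definition convw (A : set B) : set B := w_closure (conv_hull A).

Definition convex_set (A : set B) : Prop :=
  forall a b (t : R), A a -> A b -> 0 <= t <= 1 -> A (t *: a + (1 - t) *: b).

Definition w_closed (A : set B) : Prop := w_closure A `<=` A.

End SSD.

From HB Require Import structures.
From mathcomp Require Import all_boot all_order all_algebra.
From mathcomp Require Import boolp classical_sets reals constructive_ereal ereal.
From mathcomp Require Import ring lra.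
Set Implicit Arguments. Unset Strict Implicit. Unset Printing Implicit Defensive.
Import Order.TTheory GRing.Theory Num.Theory.
Local Open Scope classical_set_scope.
Local Open Scope ring_scope.

(* On [A], q-positivity makes [Phi_A] and its conjugate both equal to [q], so
   [A] lies in [Pq (Phi_A^@)]; where [Phi_A^@ = q] one also gets [Phi_A <= q],
   hence equality in Fenchel-Young.  For [b] in [G_{Phi_A}], Fenchel-Young tested
   at the points of [A] gives [q (b - a) >= 0].  If [b] were outside the weak
   closure of [conv A], finitely many functionals [bf _ c_i] would keep [conv A]
   off a cube around [b]; in [R^n] a convex set avoiding a ball around the origin
   lies in a half-space [<l, z> >= e^2] (take [l] the minimal-norm point of its
   closure), so some [d] satisfies [bf a d >= bf b d + e^2] on [A], and testing
   [Phi_A^@ b] at [b - d] beats [bf b b - Phi_A b] by [e^2].  Parts (2) and (3)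
   follow: a convex weakly closed [A] contains [conv^w A], and a maximal [A]
   absorbs every [b] in [A^pi] since [A u {b}] stays q-positive. *)

Lemma ler_of_linear_defect (R : realFieldType) (a m C : R) : 0 <= C ->
  (forall r, 0 < r -> r <= 1 -> m - r * C <= a) -> m <= a.
Proof.
move=> C0 H; apply/ler_addgt0Pr => e e0.
have C1 : 0 < C + 1 + e by lra.
have r0 : 0 < e / (C + 1 + e) by rewrite divr_gt0.
have rE : e / (C + 1 + e) * (C + 1 + e) = e by rewrite divfK // gt_eqF.
have r1 : e / (C + 1 + e) <= 1 by rewrite ler_pdivrMr // mul1r; lra.
have := H _ r0 r1; nra.
Qed.

Section MinimalNorm.
Variables (R : realType) (n : nat).
Implicit Types (u v y z : 'rV[R]_n) (r : R).

Definition dot u v : R := \sum_(i < n) u 0 i * v 0 i.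

Lemma dot_ge0 u : 0 <= dot u u.
Proof. by apply: sumr_ge0 => i _; rewrite -expr2 sqr_ge0. Qed.

Lemma dotC u v : dot u v = dot v u.
Proof. by apply: eq_bigr => i _; rewrite mulrC. Qed.

Lemma dotDl u v w : dot (u + v) w = dot u w + dot v w.
Proof. by rewrite /dot -big_split; apply: eq_bigr => i _; rewrite !mxE mulrDl. Qed.

Lemma dotZl a u v : dot (a *: u) v = a * dot u v.
Proof. by rewrite /dot mulr_sumr; apply: eq_bigr => i _; rewrite !mxE mulrA. Qed.

Lemma dotNl u v : dot (- u) v = - dot u v.
Proof. by rewrite -scaleN1r dotZl mulN1r. Qed.

Lemma dotDr u v w : dot u (v + w) = dot u v + dot u w.
Proof. by rewrite !(dotC u) dotDl. Qed.

Lemma dotZr a u v : dot u (a *: v) = a * dot u v.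
Proof. by rewrite !(dotC u) dotZl. Qed.

Lemma dotNr u v : dot u (- v) = - dot u v.
Proof. by rewrite !(dotC u) dotNl. Qed.

Definition dotE := (dotDl, dotDr, dotZl, dotZr, dotNl, dotNr).

Lemma sqr_le_dot u i : u 0 i ^+ 2 <= dot u u.
Proof.
rewrite /dot (bigD1 i) //= expr2 lerDl.
by apply: sumr_ge0 => j _; rewrite -expr2 sqr_ge0.
Qed.

Variables (K : set 'rV[R]_n) (K_convex : convex_set K) (K_neq0 : K !=set0).

Let m := inf [set dot z z | z in K].

Let has_inf_norms : has_inf [set dot z z | z in K].
Proof.
have [z0 Kz0] := K_neq0; split; first by exists (dot z0 z0), z0.
by exists 0 => _ [z _ <-]; exact: dot_ge0.
Qed.

Let m_ge0 : 0 <= m.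
Proof. by apply: lb_le_inf; [exact: has_inf_norms.1| move=> _ [z _ <-]; exact: dot_ge0]. Qed.

Lemma inf_le_dot z : K z -> m <= dot z z.
Proof. by move=> Kz; apply: (ge_inf has_inf_norms.2); exists z. Qed.

Definition near_min r y := K y /\ dot y y <= m + r ^+ 2.

Lemma near_min_exists r : 0 < r -> exists y, near_min r y.
Proof.
move=> r0; have [_ [y Ky <-] lt] := inf_adherent (exprn_gt0 2 r0) has_inf_norms.
by exists y; split => //; exact: ltW.
Qed.

Lemma near_minW r r' y : 0 <= r -> r <= r' -> near_min r y -> near_min r' y.
Proof.
move=> r0 rr' [Ky ly]; split => //.
by apply: (le_trans ly); rewrite lerD2l lerXn2r // ?nnegrE //; exact: le_trans rr'.
Qed.

(* Parallelogram law, with the midpoint of [y] and [y'] in [K]. *)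
Lemma near_min_close r y y' i : 0 <= r -> near_min r y -> near_min r y' ->
  `|y 0 i - y' 0 i| <= 2 * r.
Proof.
move=> r0 [Ky ly] [Ky' ly'].
have Kmid : K (2^-1 *: y + (1 - 2^-1) *: y') by apply: K_convex => //; lra.
have := inf_le_dot Kmid; have := sqr_le_dot (y - y') i.
have -> : dot (y - y') (y - y') = 2 * dot y y + 2 * dot y' y'
    - 4 * dot (2^-1 *: y + (1 - 2^-1) *: y') (2^-1 *: y + (1 - 2^-1) *: y').
  by rewrite !dotE (dotC y'); field.
rewrite !mxE => Di mid.
have : (y 0 i - y' 0 i) ^+ 2 <= (2 * r) ^+ 2 by lra.
by move=> h; rewrite ler_norml; apply/andP; split; nra.
Qed.

(* The limit of the near minimizers, taken coordinatewise as a supremum: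
   by [near_min_close] they form a Cauchy net. *)
Definition min_point : 'rV[R]_n :=
  \row_i sup (\bigcup_(r in [set r | 0 < r]) [set y 0 i - 2 * r | y in near_min r]).

Lemma min_point_close r y i : 0 < r -> near_min r y ->
  `|min_point 0 i - y 0 i| <= 2 * r.
Proof.
move=> r0 ly; rewrite mxE.
set S := \bigcup_(r in _) _.
have ub : ubound S (y 0 i + 2 * r).
  move=> _ [r' /= r'0 [y' ly' <-]].
  have [rr'|r'r] := leP r r'.
    have := near_min_close i (ltW r'0) (near_minW (ltW r0) rr' ly) ly'.
    by rewrite ler_norml => /andP[]; lra.
  have := near_min_close i (ltW r0) ly (near_minW (ltW r'0) (ltW r'r) ly').
  by rewrite ler_norml => /andP[]; lra.
have lb : S (y 0 i - 2 * r) by exists r => //; exists y.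
have := ub_le_sup (ex_intro _ _ ub) lb; have := ge_sup (ex_intro _ _ lb) ub.
by rewrite ler_norml; lra.
Qed.

(* Optimality of [y] along [y + r (z - y)]; [2 |z|^2 + 2 m + 2] bounds [|z - y|^2]. *)
Lemma near_min_dot r y z : 0 < r -> r <= 1 -> near_min r y -> K z ->
  m - r * (2 * dot z z + 2 * m + 3) / 2 <= dot y z.
Proof.
move=> r0 r1 [Ky ly] Kz.
have Kw : K (r *: z + (1 - r) *: y) by apply: K_convex => //; lra.
have := inf_le_dot Kw; have := dot_ge0 (z + y); have := inf_le_dot Ky.
have -> : dot (r *: z + (1 - r) *: y) (r *: z + (1 - r) *: y) = dot y y
    + 2 * r * (dot y z - dot y y) + r ^+ 2 * (dot z z - 2 * dot y z + dot y y).
  by rewrite !dotE (dotC z); ring.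
have -> : dot (z + y) (z + y) = dot z z + 2 * dot y z + dot y y.
  by rewrite !dotE (dotC z); ring.
move=> hy hzy hw.
have r21 : r ^+ 2 <= 1 by rewrite expr2; nra.
have hM : r ^+ 2 * (dot z z - 2 * dot y z + dot y y) <= r ^+ 2 * (2 * dot z z + 2 * m + 2).
  by rewrite ler_wpM2l ?sqr_ge0 //; nra.
have : r * (2 * (dot y y - dot y z)) <= r * (r * (2 * dot z z + 2 * m + 3)).
  by rewrite expr2 in hM r21 ly; nra.
rewrite ler_pM2l //; lra.
Qed.

Lemma min_point_dot z : K z -> m <= dot min_point z.
Proof.
move=> Kz; pose S := \sum_(i < n) `|z 0 i|.
have S0 : 0 <= S by apply: sumr_ge0.
apply: (@ler_of_linear_defect _ _ _ ((2 * dot z z + 2 * m + 3) / 2 + 2 * S)).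
  by have := dot_ge0 z; have := m_ge0; lra.
move=> r r0 r1; have [y ly] := near_min_exists r0.
have hy := near_min_dot r0 r1 ly Kz.
have : - (2 * r * S) <= dot min_point z - dot y z.
  rewrite /dot -sumrB /S mulr_sumr -sumrN; apply: ler_sum => i _.
  rewrite -mulrBl; apply: lerNnormlW; rewrite normrM.
  by apply: ler_wpM2r => //; exact: min_point_close.
lra.
Qed.

Lemma separation_dot d : (forall z, K z -> d <= dot z z) ->
  exists l, forall z, K z -> d <= dot l z.
Proof.
move=> Kd; exists min_point => z Kz; apply: le_trans (min_point_dot Kz).
by apply: lb_le_inf; [exact: has_inf_norms.1| move=> _ [y Ky <-]; exact: Kd].
Qed.

End MinimalNorm.

Section ConvexHull.
Variables (R : realType) (B : lmodType R).
Implicit Types A C : set B.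

Lemma conv_hull_sub A : A `<=` conv_hull A.
Proof.
move=> a Aa; exists 1%N, (fun _ => 1), (fun _ => a).
by rewrite !big_ord1 scale1r.
Qed.

Lemma conv_hull_convex A : convex_set (conv_hull A).
Proof.
move=> _ _ t [n1 [l1 [a1 [l10 [s1 [A1 ->]]]]]] [n2 [l2 [a2 [l20 [s2 [A2 ->]]]]]] /andP[t0 t1].
have sl (i : 'I_n1) : split (lshift n2 i) = inl i := unsplitK (inl i).
have sr (j : 'I_n2) : split (rshift n1 j) = inr j := unsplitK (inr j).
exists (n1 + n2)%N,
  (fun k => match split k with inl i => t * l1 i | inr j => (1 - t) * l2 j end),
  (fun k => match split k with inl i => a1 i | inr j => a2 j end).
split; first by move=> k; case: (split k) => i; apply: mulr_ge0 => //; rewrite subr_ge0.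
split.
  rewrite big_split_ord /=.
  under eq_bigr do rewrite sl.
  under [X in _ + X]eq_bigr do rewrite sr.
  by rewrite -!mulr_sumr s1 s2; ring.
split; first by move=> k; case: (split k).
rewrite big_split_ord /= !scaler_sumr; congr (_ + _); apply: eq_bigr => i _.
  by rewrite sl scalerA.
by rewrite sr scalerA.
Qed.

Lemma conv_hull_sub_convex C : convex_set C -> conv_hull C `<=` C.
Proof.
move=> cC _ [n [l [a [l0 [s1 [Ca ->]]]]]].
elim: n l a l0 s1 Ca => [|n IH] l a l0 s1 Ca.
  by move: s1; rewrite big_ord0 => /eqP; rewrite eq_sym oner_eq0.
rewrite big_ord_recr /=; rewrite big_ord_recr /= in s1.
set lw := fun i : 'I_n => l (widen_ord (leqnSn n) i) in s1 *.
set aw := fun i : 'I_n => a (widen_ord (leqnSn n) i).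
have lw0 i : 0 <= lw i by exact: l0.
set x := \sum_(i < n) _ *: _.
set s := \sum_(i < n) lw i in s1.
have [s0|s_neq0] := eqVneq s 0.
  have lw_eq0 i : lw i = 0 by apply: (psumr_eq0P (P := xpredT)) => // j _.
  have -> : x = 0 by apply: big1 => i _; rewrite -/(lw i) lw_eq0 scale0r.
  by rewrite add0r (_ : l ord_max = 1) ?scale1r //; lra.
have s_gt0 : 0 < s by rewrite lt_def s_neq0 sumr_ge0.
have Cy : C (\sum_(i < n) (lw i / s) *: aw i).
  apply: (IH (fun i => lw i / s) aw) => //.
  - by move=> i; apply: divr_ge0 => //; exact: ltW.
  - by rewrite -mulr_suml divff.
  - by move=> i; exact: Ca.
have -> : x = s *: \sum_(i < n) (lw i / s) *: aw i.
  by rewrite /x scaler_sumr; apply: eq_bigr => i _; rewrite scalerA mulrC divfK.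
have -> : l ord_max = 1 - s by lra.
by apply: cC => //; have := l0 ord_max; lra.
Qed.

End ConvexHull.

Section SymmetricBilinear.
Variables (R : realType) (B : lmodType R) (bf : B -> B -> R).
Hypothesis bfC : forall x y, bf x y = bf y x.
Hypothesis bf_linear : forall (a : R) x y z, bf (a *: x + y) z = a * bf x z + bf y z.

Lemma bf0l z : bf 0 z = 0.
Proof. by have := bf_linear 1 0 0 z; rewrite scaler0 addr0 mul1r; lra. Qed.

Lemma bfDl x y z : bf (x + y) z = bf x z + bf y z.
Proof. by have := bf_linear 1 x y z; rewrite scale1r mul1r. Qed.

Lemma bfZl a x z : bf (a *: x) z = a * bf x z.
Proof. by have := bf_linear a x 0 z; rewrite addr0 bf0l addr0. Qed.

Lemma bfNl x z : bf (- x) z = - bf x z.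
Proof. by rewrite -scaleN1r bfZl mulN1r. Qed.

Lemma bfBl x y z : bf (x - y) z = bf x z - bf y z.
Proof. by rewrite bfDl bfNl. Qed.

Lemma bfZr a x z : bf z (a *: x) = a * bf z x.
Proof. by rewrite bfC bfZl bfC. Qed.

Lemma bfBr x y z : bf z (x - y) = bf z x - bf z y.
Proof. by rewrite bfC bfBl !(bfC z). Qed.

Lemma bf_sumr n x (F : 'I_n -> B) : bf x (\sum_(i < n) F i) = \sum_(i < n) bf x (F i).
Proof.
elim/big_rec2: _ => [|i y1 y2 _ <-]; first by rewrite bfC bf0l.
by rewrite bfC bfDl !(bfC _ x).
Qed.

Lemma q0 : q bf 0 = 0.
Proof. by rewrite /q bf0l mul0r. Qed.

Lemma qN x : q bf (- x) = q bf x.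
Proof. by rewrite /q bfNl bfC bfNl opprK. Qed.

Lemma qB x y : q bf (x - y) = q bf x - bf x y + q bf y.
Proof. by rewrite /q !bfBl !bfBr (bfC y x); field. Qed.

Lemma q_positive_setU1 A b : q_positive bf A -> pi_set bf A b ->
  q_positive bf (A `|` [set b]).
Proof.
move=> [_ hA] pib; split; first by exists b; right.
move=> x y [Ax|->] [Ay|->]; [exact: hA | | exact: pib | by rewrite subrr q0].
by rewrite -opprB qN; exact: pib.
Qed.

Lemma w_closureS S S' : S `<=` S' -> w_closure bf S `<=` w_closure bf S'.
Proof. by move=> SS' x clx cs e e0; have [s [/SS' ? ?]] := clx cs e e0; exists s. Qed.

(* A point outside the w(B,B)-closure of a convex set is strictly separated
   from it: project onto the finitely many functionals witnessing this and
   separate from a cube in R^n. *)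
Lemma w_separation C b : convex_set C -> C !=set0 -> ~ w_closure bf C b ->
  exists d e, 0 < e /\ forall s, C s -> bf b d + e <= bf s d.
Proof.
move=> Cconv [s0 Cs0] /existsNP[cs /existsNP[e /not_implyP[e0 Cfar]]].
pose T s : 'rV[R]_(size cs) := \row_i (bf s cs`_i - bf b cs`_i).
have T_affine s1 s2 t : T (t *: s1 + (1 - t) *: s2) = t *: T s1 + (1 - t) *: T s2.
  by apply/rowP => i; rewrite !mxE /= bf_linear bfZl; ring.
have [|||l hl] := @separation_dot R _ (T @` C) _ _ (e ^+ 2).
- move=> _ _ t [s1 Cs1 <-] [s2 Cs2 <-] t01.
  by exists (t *: s1 + (1 - t) *: s2); [exact: Cconv | exact: T_affine].
- by exists (T s0), s0.
- move=> _ [s Cs <-].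
  have [c cs_c ec] : exists2 c, c \in cs & e <= `|bf s c - bf b c|.
    have [hall|] := boolP (all (fun c => `|bf s c - bf b c| < e) cs).
      by case: Cfar; exists s.
    by rewrite -has_predC => /hasP[c ? /=]; rewrite -leNgt; exists c.
  have ic : (index c cs < size cs)%N by rewrite index_mem.
  apply: le_trans (sqr_le_dot _ (Ordinal ic)).
  rewrite mxE /= nth_index // -[X in _ <= X]real_normK ?num_real //; nra.
exists (\sum_(i < size cs) l 0 i *: cs`_i), (e ^+ 2); split; first exact: exprn_gt0.
move=> s Cs; have := hl (T s) (ex_intro2 _ _ s Cs erefl).
suff -> : dot l (T s) = bf s (\sum_(i < size cs) l 0 i *: cs`_i)
    - bf b (\sum_(i < size cs) l 0 i *: cs`_i) by lra.
rewrite !bf_sumr -sumrB; apply: eq_bigr => i _.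
by rewrite !bfZr mxE; ring.
Qed.

Lemma le_Phi A x a : A a -> ((bf x a - q bf a)%:E <= Phi bf A x)%E.
Proof. by move=> Aa; apply: ereal_sup_ubound; exists a. Qed.

Lemma le_conj_at f b c : ((bf c b)%:E - f c <= conj_at bf f b)%E.
Proof. by apply: ereal_sup_ubound; exists c. Qed.

Variables (A : set B) (hA : q_positive bf A).

Lemma Phi_q a : A a -> Phi bf A a = (q bf a)%:E.
Proof.
move=> Aa; apply/eqP; rewrite eq_le; apply/andP; split.
  apply: ge_ereal_sup => _ [a' Aa' <-]; rewrite lee_fin.
  by have := hA.2 _ _ Aa Aa'; rewrite qB; lra.
by have := le_Phi a Aa; rewrite /q; congr (_ <= _)%E; congr (_%:E); field.
Qed.

Lemma conj_Phi_q a : A a -> conj_at bf (Phi bf A) a = (q bf a)%:E.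
Proof.
move=> Aa; apply/eqP; rewrite eq_le; apply/andP; split.
  apply: ge_ereal_sup => _ [c _ <-].
  have := le_Phi c Aa; case: (Phi bf A c) => [r| |] //=; rewrite ?lee_fin.
    by rewrite bfC; lra.
  by rewrite leNye.
have := le_conj_at (Phi bf A) a a; rewrite (Phi_q Aa) -EFinB.
by congr (_ <= _)%E; congr (_%:E); rewrite /q; field.
Qed.

Lemma Gset_Phi_fin b : Gset bf (Phi bf A) b -> exists p p',
  [/\ Phi bf A b = p%:E, conj_at bf (Phi bf A) b = p'%:E & p + p' = bf b b].
Proof.
have [a0 Aa0] := hA.1; rewrite /Gset /=.
have := le_Phi b Aa0; have := le_conj_at (Phi bf A) b a0; rewrite (Phi_q Aa0).
case: (Phi bf A b) => [p| |]; case: (conj_at bf (Phi bf A) b) => [p'| |] //=.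
by move=> _ _ [<-]; exists p, p'.
Qed.

Lemma sub_Pq_conj_Phi : A `<=` Pq bf (conj_at bf (Phi bf A)).
Proof. by move=> a Aa; rewrite /Pq /= conj_Phi_q. Qed.

Lemma Pq_conj_Phi_sub_Gset : Pq bf (conj_at bf (Phi bf A)) `<=` Gset bf (Phi bf A).
Proof.
move=> b; rewrite /Pq /Gset /= => conjb.
have [a0 Aa0] := hA.1.
have Phib_le : (Phi bf A b <= (q bf b)%:E)%E.
  apply: ge_ereal_sup => _ [a Aa <-]; rewrite -conjb.
  by have := le_conj_at (Phi bf A) b a; rewrite (Phi_q Aa) -EFinB bfC.
have := le_conj_at (Phi bf A) b b; have := le_Phi b Aa0; rewrite conjb.
case: (Phi bf A b) Phib_le => [p| |] //=; rewrite ?lee_fin => Phib_le _ le_p.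
have -> : p = q bf b by apply/le_anti/andP; split => //; move: le_p; rewrite /q; lra.
by rewrite -EFinD /q; congr (_%:E); field.
Qed.

Lemma Gset_Phi_sub_pi : Gset bf (Phi bf A) `<=` pi_set bf A.
Proof.
move=> b /Gset_Phi_fin[p [p' [Phib conjb pp']]] a Aa.
have := le_Phi b Aa; have := le_conj_at (Phi bf A) b a.
rewrite Phib conjb (Phi_q Aa) -EFinB !lee_fin qB (bfC a b) /q.
lra.
Qed.

(* If [d] separates [b] from [conv A] with margin [e], the Fenchel-Young
   inequality at [b] tested against [b - d] gains [e]. *)
Lemma Gset_Phi_sub_convw : Gset bf (Phi bf A) `<=` convw bf A.
Proof.
move=> b Gb; apply: contrapT => /(w_separation (@conv_hull_convex _ _ A)).
have [a0 Aa0] := hA.1.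
case=> [|d [e [e0 sep]]]; first by exists a0; exact: conv_hull_sub.
have [p [p' [Phib conjb pp']]] := Gset_Phi_fin Gb.
have Phi_le : (Phi bf A (b - d) <= (p - bf b d - e)%:E)%E.
  apply: ge_ereal_sup => _ [a Aa <-]; rewrite lee_fin.
  have := le_Phi b Aa; rewrite Phib lee_fin.
  have := sep _ (conv_hull_sub Aa); rewrite bfBl (bfC d a); lra.
have := le_conj_at (Phi bf A) b (b - d); rewrite conjb.
case: (Phi bf A (b - d)) Phi_le => [r| |] //=; rewrite ?lee_fin.
by rewrite bfBl (bfC d b); lra.
Qed.

End SymmetricBilinear.

Theorem mainTheorem7 (R : realType) (B : lmodType R) (bf : B -> B -> R)
  (hB : SSD_space bf) (A : set B) (hA : q_positive bf A) :
  (A `<=` Pq bf (conj_at bf (Phi bf A)) /\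
   Pq bf (conj_at bf (Phi bf A)) `<=` Gset bf (Phi bf A) /\
   Gset bf (Phi bf A) `<=` pi_set bf A `&` convw bf A) /\
  (convex_set A -> w_closed bf A -> A = Gset bf (Phi bf A)) /\
  (max_q_positive bf A -> A = Gset bf (Phi bf A)).
Proof.
have [_ [bfC bf_linear]] := hB.
have A_Pq := sub_Pq_conj_Phi bfC bf_linear hA.
have Pq_G := Pq_conj_Phi_sub_Gset bfC bf_linear hA.
have G_pi := Gset_Phi_sub_pi bfC bf_linear hA.
have G_convw := Gset_Phi_sub_convw bfC bf_linear hA.
have A_G : A `<=` Gset bf (Phi bf A) by move=> a /A_Pq /Pq_G.
split; first by split=> //; split=> // b Gb; split; [exact: G_pi | exact: G_convw].
split.
  move=> Aconv Aclosed; apply/seteqP; split=> // b /G_convw.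
  by move=> /(w_closureS (conv_hull_sub_convex Aconv)) /Aclosed.
move=> [_ Amax]; apply/seteqP; split=> // b Gb.
have AbU := q_positive_setU1 bfC bf_linear hA (G_pi _ Gb).
by rewrite -(Amax _ AbU (@subsetUl _ A [set b])); right.
Qed.
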